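(* Let $X=\{x_j\mid j\in J\}$ be a set and $\tilde q$ a symbol not in $X$. Let $V$ be the $\mathbf{k}$-vector space with basis $X\cup\{\tilde q\}$, $T(V)$ its tensor algebra, and $I$ the two-sided ideal of $T(V)$ generated by $\{\tilde q\otimes\tilde q-\tilde q\}\cup\{\tilde q\otimes a\otimes\tilde q-\tilde q\otimes a\mid a\in T(V)\}$. Let $\hat A:=T(V)/I$, $\hat q:=\tilde q+I$, and define $\hat i:X\to(\hat A,\hat q)$ by $\hat i(x_j)=x_j+I$. Then $((\hat A,\hat q),\hat i)$ is the free invariant algebra generated by $X$: for every invariant algebra $(A,q)$ and every map $\theta:X\to(A,q)$ there is a unique invariant homomorphism $\hat\theta:(\hat A,\hat q)\to(A,q)$ with $\hat\theta\circ\hat i=\theta$.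
   Context: All associative algebras have an identity. For an associative algebra $A$ with idempotent $q$, the invariant algebra is $(A,q):=\{x\in A\mid qxq=qx\}$ (a subalgebra containing $1$ and $q$). For invariant algebras $(A,q_A),(B,q_B)$, an invariant homomorphism is a linear map $\phi$ with $\phi(xy)=\phi(x)\phi(y)$, $\phi(1_A)=1_B$, $\phi(q_A)=q_B$. *)

From HB Require Import structures.
From mathcomp Require Import all_boot all_algebra generic_quotient.
From mathcomp Require Import monalg.
From mathcomp Require Import boolp.

Set Implicit Arguments.
Unset Strict Implicit.
Unset Printing Implicit Defensive.

Import GRing.Theory.
Local Open Scope ring_scope.
Local Open Scope quotient_scope.

Definition inv_mem (k : pzRingType) (A : algType k) (q x : A) : Prop :=
  q * x * q = q * x.
Arguments inv_mem {k} A q x.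

Section FreeInvariant.
Variables (k : fieldType) (J : choiceType).

(* Basis of V : X ∪ {q~}, with x_j = Some j and q~ = None. *)
Definition basisV := option J.

(* Tensor algebra T(V) = free associative k-algebra on basisV
   = monoid algebra of the free monoid on basisV. *)
Definition TV := {malg k[{fmonom basisV}]}.

Definition tq : TV := << fmu (None : basisV) >>.
Definition tx (j : J) : TV := << fmu (Some j) >>.

Definition gens (g : TV) : Prop :=
  g = tq * tq - tq \/ exists a : TV, g = tq * a * tq - tq * a.

Definition two_sided_ideal (S : TV -> Prop) : Prop :=
  [/\ S 0, (forall x y, S x -> S y -> S (x - y)),
      (forall a x, S x -> S (a * x)) & (forall a x, S x -> S (x * a))].

Definition idealI (x : TV) : Prop :=
  forall S, two_sided_ideal S -> (forall g, gens g -> S g) -> S x.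

Lemma idealI_ideal : two_sided_ideal idealI.
Proof.
split.
- by move=> S [] .
- by move=> x y Hx Hy S HS Hg; case: (HS) => _ Hs _ _; apply: Hs; [apply: Hx|apply: Hy].
- by move=> a x Hx S HS Hg; case: (HS) => _ _ Hl _; apply: Hl; apply: Hx.
- by move=> a x Hx S HS Hg; case: (HS) => _ _ _ Hr; apply: Hr; apply: Hx.
Qed.

Definition congI (a b : TV) : bool := `[< idealI (a - b) >].

Lemma congI_refl : reflexive congI.
Proof.
by move=> x; rewrite /congI subrr; apply/asboolP; case: idealI_ideal.
Qed.

Lemma congI_sym : symmetric congI.
Proof.
have [H0 Hsub _ _] := idealI_ideal.
suff H : forall x y, congI x y -> congI y x.
  by move=> x y; apply/idP/idP; apply: H.
move=> x y /asboolP Hxy; apply/asboolP.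
have -> : y - x = 0 - (x - y) by rewrite sub0r opprB.
exact: (Hsub).
Qed.

Lemma congI_trans : transitive congI.
Proof.
have [H0 Hsub _ _] := idealI_ideal.
move=> y x z /asboolP Hxy /asboolP Hyz; apply/asboolP.
have -> : x - z = (x - y) - (z - y) by rewrite opprB addrA subrK.
apply: (Hsub) => //; have -> : z - y = 0 - (y - z) by rewrite sub0r opprB.
exact: (Hsub).
Qed.

Definition congI_rel := EquivRel congI congI_refl congI_sym congI_trans.

Definition Ahat := {eq_quot congI_rel}.

(* Operations of Â induced from T(V) (well-defined since I is an ideal). *)
Definition piA (a : TV) : Ahat := \pi_Ahat a.
Definition addA (x y : Ahat) : Ahat := piA (repr x + repr y).
Definition scaleA (c : k) (x : Ahat) : Ahat := piA (c *: repr x).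
Definition mulA (x y : Ahat) : Ahat := piA (repr x * repr y).
Definition oneA : Ahat := piA 1.
Definition qhat : Ahat := piA tq.
Definition ihat (j : J) : Ahat := piA (tx j).

Definition inv_memA (x : Ahat) : Prop :=
  mulA (mulA qhat x) qhat = mulA qhat x.

Definition inv_homA (A : algType k) (q : A) (phi : Ahat -> A) : Prop :=
  (forall x, inv_memA x -> inv_mem A q (phi x)) /\
  (forall x y, inv_memA x -> inv_memA y -> phi (addA x y) = phi x + phi y) /\
  (forall c x, inv_memA x -> phi (scaleA c x) = c *: phi x) /\
  (forall x y, inv_memA x -> inv_memA y -> phi (mulA x y) = phi x * phi y) /\
  phi oneA = 1 /\ phi qhat = q.

End FreeInvariant.

From Pilot Require Import Defs.
From HB Require Import structures.
From mathcomp Require Import all_boot all_algebra generic_quotient.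
From mathcomp Require Import monalg boolp.

Set Implicit Arguments.
Unset Strict Implicit.
Unset Printing Implicit Defensive.

Import GRing.Theory.
Local Open Scope ring_scope.

(* The evaluation of T(V) in A sending x_j to theta(x_j) and ~q to q is an
   algebra morphism with values in the subalgebra (A,q), since (A,q) contains
   these generators.  It therefore kills ~q~q - ~q and every ~q a ~q - ~q a,
   and descends to A^.  Conversely, these relations make every element of A^
   invariant, so an invariant homomorphism is an algebra morphism on all of
   A^; composed with the projection it is an algebra morphism out of the free
   algebra T(V), hence determined by its values on the generators. *)

Section FreeAlgebra.
Variables (R : comNzRingType) (I : choiceType) (A : algType R) (gen : I -> A).
Local Notation F := {malg R[{fmonom I}]}.

Lemma malgU_fmonom (m : {fmonom I}) : << m >> = \prod_(i <- m) (<< fmu i >> : F).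
Proof.
case: m => s; elim: s => [|i s IH].
  by rewrite big_nil -mpolyC1E; congr << _ >>; apply: val_inj; rewrite /= fm1.
rewrite big_cons -IH malgM_def fgmulUU mulr1; congr << _ >>.
by apply: val_inj; rewrite /= fmM fmU.
Qed.

Lemma malgUZ c (m : {fmonom I}) : << c *g m >> = c *: (<< m >> : F).
Proof. by rewrite -mul_malgC malgM_def fgmulUU mulr1 mul1m. Qed.

Definition eval_fmonom (m : {fmonom I}) : A := \prod_(i <- m) gen i.

Lemma eval_fmonom_is_mmorphism : mmorphism eval_fmonom.
Proof. by split=> [m1 m2|]; rewrite /eval_fmonom ?fmM ?fm1 (big_cat, big_nil). Qed.

HB.instance Definition _ := isMultiplicative.Build _ _ eval_fmonom
  eval_fmonom_is_mmorphism.

Definition eval_free (a : F) : A := mmap (in_alg A) eval_fmonom a.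

Lemma eval_free_is_monoid_morphism : monoid_morphism eval_free.
Proof.
have [evalM eval1] := commr_mmap_is_multiplicative (f := in_alg A)
  (h := eval_fmonom) (fun _ _ _ => comm_alg _ _).
by split; [exact: eval1 | exact: evalM].
Qed.

Lemma eval_freeZ : scalable eval_free.
Proof. by move=> c a; rewrite /eval_free mmapZ /= mulr_algl. Qed.

HB.instance Definition _ := GRing.isZmodMorphism.Build F A eval_free
  (mmapB (f := in_alg A) (h := eval_fmonom)).
HB.instance Definition _ := GRing.isMonoidMorphism.Build F A eval_free
  eval_free_is_monoid_morphism.
HB.instance Definition _ := GRing.isScalable.Build R F A *:%R eval_free
  eval_freeZ.

Lemma eval_freeD : {morph eval_free : a b / a + b}. Proof. exact: raddfD. Qed.
Lemma eval_freeB : {morph eval_free : a b / a - b}. Proof. exact: raddfB. Qed.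
Lemma eval_freeM : {morph eval_free : a b / a * b}. Proof. exact: rmorphM. Qed.
Lemma eval_free1 : eval_free 1 = 1. Proof. exact: rmorph1. Qed.

Lemma eval_freeU (m : {fmonom I}) : eval_free << m >> = eval_fmonom m.
Proof. by rewrite /eval_free mmapU /= scale1r mul1r. Qed.

Lemma eval_free_gen i : eval_free << fmu i >> = gen i.
Proof. by rewrite eval_freeU /eval_fmonom fmU big_seq1. Qed.

Lemma eval_free_unique (f : F -> A) :
    {morph f : a b / a + b} -> (forall c a, f (c *: a) = c *: f a) ->
    {morph f : a b / a * b} -> f 1 = 1 -> (forall i, f << fmu i >> = gen i) ->
  f =1 eval_free.
Proof.
move=> fD fZ fM f1 f_gen a; rewrite (monalgE a).
have f0 : f 0 = 0 by apply: (@addrI _ (f 0)); rewrite -fD !addr0.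
rewrite (big_morph f fD f0) raddf_sum; apply: eq_bigr => m _.
rewrite malgUZ fZ /= eval_freeZ.
rewrite malgU_fmonom (big_morph f fM f1) rmorph_prod.
by congr (_ *: _); apply: eq_bigr => i _ /=; rewrite f_gen eval_free_gen.
Qed.
End FreeAlgebra.

Section InvariantSubalgebra.
Variables (R : pzRingType) (A : algType R) (q : A).
Hypothesis qq : q * q = q.

Lemma inv_mem0 : inv_mem A q 0.
Proof. by rewrite /inv_mem mulr0 mul0r. Qed.

Lemma inv_mem1 : inv_mem A q 1.
Proof. by rewrite /inv_mem mulr1 qq. Qed.

Lemma inv_mem_idem : inv_mem A q q.
Proof. by rewrite /inv_mem qq. Qed.

Lemma inv_memD x y : inv_mem A q x -> inv_mem A q y -> inv_mem A q (x + y).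
Proof. by rewrite /inv_mem => qxq qyq; rewrite mulrDr mulrDl qxq qyq. Qed.

Lemma inv_memZ c x : inv_mem A q x -> inv_mem A q (c *: x).
Proof. by rewrite /inv_mem => qxq; rewrite -scalerAr -scalerAl qxq. Qed.

Lemma inv_memM x y : inv_mem A q x -> inv_mem A q y -> inv_mem A q (x * y).
Proof.
rewrite /inv_mem => qxq qyq.
transitivity (q * x * (q * y * q)); first by rewrite !mulrA qxq.
by rewrite qyq !mulrA qxq.
Qed.
End InvariantSubalgebra.

Lemma eval_free_inv_mem (R : comNzRingType) (I : choiceType) (A : algType R)
    (q : A) (gen : I -> A) :
    q * q = q -> (forall i, inv_mem A q (gen i)) ->
  forall a, inv_mem A q (eval_free gen a).
Proof.
move=> qq gen_inv a; rewrite (monalgE a) raddf_sum.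
apply: (big_ind (inv_mem A q)) => [|x y|m _].
- exact: inv_mem0.
- exact: inv_memD.
- rewrite malgUZ /= eval_freeZ eval_freeU; apply: inv_memZ.
  by apply: (big_ind (inv_mem A q)) => //; [exact: inv_mem1 | exact: inv_memM].
Qed.

Section EvaluationInvariant.
Variables (k : fieldType) (J : choiceType) (A : algType k) (q : A).
Variable theta : J -> A.
Hypotheses (qq : q * q = q) (theta_inv : forall j, inv_mem A q (theta j)).

Definition basis_val (i : basisV J) : A := if i is Some j then theta j else q.

Local Notation eval := (eval_free basis_val).

Lemma basis_val_inv_mem i : inv_mem A q (basis_val i).
Proof. by case: i => [j|] /=; [exact: theta_inv | exact: inv_mem_idem]. Qed.

Lemma eval_tq : eval (tq k J) = q.
Proof. exact: eval_free_gen. Qed.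

Lemma eval_tx j : eval (tx k j) = theta j.
Proof. exact: eval_free_gen. Qed.

Lemma eval_idealI x : idealI x -> eval x = 0.
Proof.
move=> Ix; apply: (Ix (fun x => eval x = 0)).
- split=> [|a b ea eb|a b eb|a b eb]; first exact: raddf0.
  + by rewrite eval_freeB ea eb subrr.
  + by rewrite eval_freeM eb mulr0.
  + by rewrite eval_freeM eb mul0r.
- move=> g [->|[a ->]].
    by rewrite eval_freeB eval_freeM eval_tq qq subrr.
  apply/eqP; rewrite eval_freeB subr_eq0; apply/eqP.
  transitivity (q * eval a * q); first by rewrite 2!eval_freeM eval_tq.
  by rewrite eval_freeM eval_tq (eval_free_inv_mem qq basis_val_inv_mem a).
Qed.
End EvaluationInvariant.

Section Quotient.
Variables (k : fieldType) (J : choiceType).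
Local Notation TV := (TV k J).
Local Notation Ahat := (Ahat k J).

Lemma idealID (x y : TV) : idealI x -> idealI y -> idealI (x + y).
Proof.
have [I0 IB _ _] := @idealI_ideal k J.
by move=> Ix Iy; rewrite -[y]opprK -[- y]sub0r; apply: IB Ix (IB _ _ I0 Iy).
Qed.

Lemma idealIMl (a x : TV) : idealI x -> idealI (a * x).
Proof. by have [_ _ IMl _] := @idealI_ideal k J; apply: IMl. Qed.

Lemma idealIMr (a x : TV) : idealI x -> idealI (x * a).
Proof. by have [_ _ _ IMr] := @idealI_ideal k J; apply: IMr. Qed.

Lemma piA_eq (a b : TV) : idealI (a - b) -> piA a = piA b.
Proof. by move=> Iab; apply/eqquotP; apply/asboolP. Qed.

Lemma idealI_repr_piA (a : TV) : idealI (repr (piA a) - a).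
Proof. by apply/asboolP; apply/(@eqquotP _ _ Ahat); rewrite reprK. Qed.

Lemma piA_repr (x : Ahat) : piA (repr x) = x.
Proof. exact: reprK. Qed.

Lemma addA_piA (a b : TV) : Defs.addA (piA a) (piA b) = piA (a + b).
Proof.
apply: piA_eq; rewrite opprD addrACA.
by apply: idealID; apply: idealI_repr_piA.
Qed.

Lemma scaleA_piA c (a : TV) : scaleA c (piA a) = piA (c *: a).
Proof.
apply: piA_eq; rewrite -scalerBr -mul_malgC.
by apply: idealIMl; apply: idealI_repr_piA.
Qed.

Lemma mulA_piA (a b : TV) : Defs.mulA (piA a) (piA b) = piA (a * b).
Proof.
apply: piA_eq; set a' := repr (piA a); set b' := repr (piA b).
have -> : a' * b' - a * b = (a' - a) * b' + a * (b' - b).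
  by rewrite mulrBl mulrBr addrA subrK.
by apply: idealID; [apply: idealIMr | apply: idealIMl]; apply: idealI_repr_piA.
Qed.

Lemma inv_memA_all (x : Ahat) : inv_memA x.
Proof.
rewrite /inv_memA -(piA_repr x) /qhat !mulA_piA; apply: piA_eq.
by move=> S _; apply; right; exists (repr x).
Qed.
End Quotient.

Section UniversalProperty.
Variables (k : fieldType) (J : choiceType) (A : algType k) (q : A).
Variable theta : J -> A.
Hypotheses (qq : q * q = q) (theta_inv : forall j, inv_mem A q (theta j)).

Local Notation eval := (eval_free (basis_val q theta)).

Definition lift_free (x : Ahat k J) : A := eval (repr x).

Lemma lift_free_piA (a : TV k J) : lift_free (piA a) = eval a.
Proof.
apply/eqP; rewrite -subr_eq0 /lift_free -eval_freeB; apply/eqP.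
exact: (eval_idealI qq theta_inv (idealI_repr_piA a)).
Qed.

Lemma lift_free_ihat j : lift_free (ihat k j) = theta j.
Proof. by rewrite lift_free_piA eval_tx. Qed.

Lemma inv_homA_lift_free : inv_homA q lift_free.
Proof.
split=> [x _|].
  exact: (eval_free_inv_mem qq (basis_val_inv_mem qq theta_inv) (repr x)).
split=> [x y _ _|]; first by rewrite lift_free_piA eval_freeD.
split=> [c x _|]; first by rewrite lift_free_piA eval_freeZ.
split=> [x y _ _|]; first by rewrite lift_free_piA eval_freeM.
by split; rewrite lift_free_piA ?eval_free1 ?eval_tq.
Qed.

Lemma inv_homA_piA_eval (psi : Ahat k J -> A) :
    inv_homA q psi -> (forall j, psi (ihat k j) = theta j) ->
  forall a, psi (piA a) = eval a.
Proof.
move=> [_ [psiD [psiZ [psiM [psi1 psiq]]]]] psi_ihat.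
have inv := @inv_memA_all k J.
apply: eval_free_unique => [a b|c a|a b||[j|]] /=.
- by rewrite -addA_piA (psiD _ _ (inv _) (inv _)).
- by rewrite -scaleA_piA (psiZ _ _ (inv _)).
- by rewrite -mulA_piA (psiM _ _ (inv _) (inv _)).
- exact: psi1.
- exact: psi_ihat.
- exact: psiq.
Qed.
End UniversalProperty.

Theorem proposition2p1 (k : fieldType) (J : choiceType) :
  (forall j : J, inv_memA (ihat k j)) /\
  forall (A : algType k) (q : A), q * q = q ->
  forall theta : J -> A, (forall j, inv_mem A q (theta j)) ->
  exists phi : Ahat k J -> A,
    [/\ inv_homA q phi, (forall j, phi (ihat k j) = theta j) &
        forall psi : Ahat k J -> A, inv_homA q psi ->
          (forall j, psi (ihat k j) = theta j) ->
          forall x, inv_memA x -> psi x = phi x].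
Proof.
split=> [j|A q qq theta theta_inv]; first exact: inv_memA_all.
exists (lift_free q theta); split.
- exact: inv_homA_lift_free.
- exact: lift_free_ihat.
move=> psi psi_hom psi_ihat x _.
by rewrite -(piA_repr x) (inv_homA_piA_eval psi_hom psi_ihat) lift_free_piA.
Qed.
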